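(* There exist an $\omega$-power-free infinite word $x$ over an infinite alphabet and a $k\in\mathbb{N}$ such that $\mathrm{AP}(x,k)$ is empty.
   Context: A factor is a contiguous subword; $u^\ell$ is $\ell$ concatenated copies of $u$. A word is $\omega$-power-free if for every finite (nonempty) factor $u$ there exists $\ell\in\mathbb{N}$ such that $u^\ell$ is not a factor. A $k$-anti-power is a word $w=w_1\cdots w_k$ with $|w_1|=\cdots=|w_k|$ and $w_1,\dots,w_k$ pairwise distinct. $\mathrm{AP}(x,k)$ is the set of $m\in\mathbb{N}=\{1,2,\dots\}$ such that the prefix of $x$ of length $km$ is a $k$-anti-power. *)

From mathcomp Require Import all_boot.
Set Implicit Arguments. Unset Strict Implicit. Unset Printing Implicit Defensive.

(* Infinite words over the (infinite) alphabet nat are functions nat -> nat;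
   finite words are seq nat. *)
Definition iword := nat -> nat.

Definition subword (x : iword) (i n : nat) : seq nat := mkseq (fun j => x (i + j)) n.

Definition prefix_of (x : iword) (n : nat) : seq nat := subword x 0 n.

Definition factor (x : iword) (u : seq nat) : Prop :=
  exists i, u = subword x i (size u).

Definition wpow (u : seq nat) (l : nat) : seq nat := flatten (nseq l u).

Definition omega_power_free (x : iword) : Prop :=
  forall u : seq nat, u != [::] -> factor x u -> exists l : nat, ~ factor x (wpow u l).

Definition anti_power (k : nat) (w : seq nat) : Prop :=
  exists m : nat, size w = k * m /\
    uniq [seq take m (drop (i * m) w) | i <- iota 0 k].

(* m \in AP(x,k)  (m ranges over N = {1,2,...}) *)
Definition AP (x : iword) (k m : nat) : Prop :=
  0 < m /\ anti_power k (prefix_of x (k * m)).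

(** The word [x n = floor (log2 n)] works with [k = 11].  It tends to
    infinity, so a long enough power of a factor [u] would have to contain a
    letter larger than every letter of [u]: [x] is omega-power-free.  On the
    other hand [x] is constant on [[2^r, 2^(r+1))], and for [r = floor (log2 m) + 3]
    this run has length at least [4 m] and starts before position [9 m], so
    two consecutive blocks among the first [11] blocks of length [m] coincide. *)
From mathcomp Require Import all_boot.
From mathcomp Require Import zify.

Lemma mem_wpow (u : seq nat) l a : a \in wpow u l -> a \in u.
Proof. by elim: l => [|l IHl] //=; rewrite /wpow /= mem_cat => /orP[|/IHl]. Qed.

Lemma size_wpow (u : seq nat) l : size (wpow u l) = size u * l.
Proof.
elim: l => [|l IHl]; first by rewrite muln0.
by rewrite /wpow /= size_cat -/(wpow u l) IHl mulnS.
Qed.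

Lemma omega_power_free_of_unbounded (x : iword) :
  (forall M, exists N, forall n, N <= n -> M < x n) -> omega_power_free x.
Proof.
move=> x_unbounded u u_neq0 _.
have [N x_gt_max] := x_unbounded (\max_(a <- u) a).
exists N.+1 => -[i u_pow].
have N_lt_size : N < size (wpow u N.+1).
  by rewrite size_wpow; case: u u_neq0 {x_gt_max u_pow} => //= a u _; lia.
have xN_in_u : x (i + N) \in u.
  by apply: (@mem_wpow u N.+1); rewrite u_pow; apply: map_f; rewrite mem_iota.
have := @leq_bigmax_seq _ u xpredT id _ xN_in_u isT.
by rewrite leqNgt x_gt_max ?leq_addl.
Qed.

Lemma take_drop_prefix_of (x : iword) i m N : i * m + m <= N ->
  take m (drop (i * m) (prefix_of x N)) = subword x (i * m) m.
Proof.
move=> le_blockN; apply: (@eq_from_nth _ 0).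
  by rewrite size_takel ?size_mkseq // size_drop size_mkseq; lia.
move=> t; rewrite size_takel ?size_drop ?size_mkseq => [lt_tm|]; last lia.
by rewrite nth_take // nth_drop !nth_mkseq //; lia.
Qed.

Lemma not_AP_of_equal_blocks (x : iword) k m i j : i < j < k ->
  subword x (i * m) m = subword x (j * m) m -> ~ AP x k m.
Proof.
move=> /andP[lt_ij lt_jk] eq_blocks [_ [m' [size_pref /mkseq_uniqP blocks_inj]]].
have eq_m'm : m' = m by move: size_pref; rewrite size_mkseq; nia.
subst m'.
have block_eq b : b < k -> take m (drop (b * m) (prefix_of x (k * m))) = subword x (b * m) m.
  by move=> lt_bk; apply: take_drop_prefix_of; nia.
suff : i = j by move/eqP; rewrite ltn_eqF.
have lt_ik := ltn_trans lt_ij lt_jk.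
by apply: blocks_inj; rewrite ?inE //= !block_eq.
Qed.

Lemma subword_const (x : iword) c i m :
  (forall t, t < m -> x (i + t) = c) -> subword x i m = nseq m c.
Proof.
move=> x_const; apply: (@eq_from_nth _ 0); rewrite ?size_mkseq ?size_nseq // => t lt_tm.
by rewrite nth_mkseq // nth_nseq lt_tm x_const.
Qed.

Lemma not_AP_of_const_run (x : iword) k m a c :
  (forall n, a <= n < a + 3 * m -> x n = c) -> a %/ m + 2 < k -> ~ AP x k m.
Proof.
move=> x_const lt_ak APm; have [m_gt0 _] := APm.
set j := a %/ m + 1.
have lt_a_jm : a < j * m by rewrite /j; lia.
have le_jm_am : j * m <= a + m by rewrite /j; lia.
have block_const b : b <= 1 -> subword x ((j + b) * m) m = nseq m c.
  by move=> le_b1; apply: subword_const => t lt_tm; apply: x_const; nia.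
apply: (@not_AP_of_equal_blocks x k m j j.+1 _ _ APm); first by rewrite /j; lia.
by have := block_const 0 isT; have := block_const 1 isT; rewrite addn0 addn1 => -> ->.
Qed.

Definition log2_word : iword := trunc_log 2.

Lemma log2_word_unbounded M : exists N, forall n, N <= n -> M < log2_word n.
Proof. by exists (2 ^ M.+1) => n le_n; apply: trunc_log_max. Qed.

Lemma log2_word_not_AP11 m : ~ AP log2_word 11 m.
Proof.
move=> APm; have [m_gt0 _] := APm.
set T := trunc_log 2 m.
have le_Tm : 2 ^ T <= m by apply: trunc_logP.
have lt_mT : m < 2 ^ T.+1 by apply: trunc_log_ltn.
have pow3 : 2 ^ T.+3 = 8 * 2 ^ T by rewrite !expnS; lia.
have pow4 : 2 ^ T.+4 = 16 * 2 ^ T by rewrite !expnS; lia.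
rewrite expnS in lt_mT.
apply: (@not_AP_of_const_run _ 11 m (2 ^ T.+3) T.+3) APm.
  by move=> n /andP[le_an lt_n]; apply: trunc_log_eq => //; rewrite pow3 pow4 in le_an lt_n *; lia.
have : 2 ^ T.+3 %/ m <= 2 ^ T.+3 %/ 2 ^ T by apply: leq_div2l; rewrite ?expn_gt0.
rewrite pow3 mulnK ?expn_gt0 //; lia.
Qed.

Theorem theorem3p7 :
  exists (x : iword) (k : nat), 0 < k /\ omega_power_free x /\ (forall m : nat, ~ AP x k m).
Proof.
exists log2_word, 11; split => //; split.
  exact: omega_power_free_of_unbounded log2_word_unbounded.
exact: log2_word_not_AP11.
Qed.
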